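(* Let $M$ be a matroid on $E$, $\mathfrak{S}\subseteq\mathcal{P}(E)$ and $Z\in\mathfrak{S}$. Then: (1) $\mathrm{ec}_{\mathfrak{S}}(M)-\mathrm{ec}_{\mathfrak{S}-\{Z\}}(M)=a_{\mathfrak{S}}(Z)\,b_{\mathfrak{S}}(Z)$; (2) for every $S\in\mathfrak{S}-\{Z\}$, $a_{\mathfrak{S}}(S)-a_{\mathfrak{S}-\{Z\}}(S)=a_{\mathfrak{S}}(Z)\,\mu_{\mathfrak{S}}(Z,S)$; (3) for every $S\in\mathfrak{S}-\{Z\}$, $b_{\mathfrak{S}}(S)-b_{\mathfrak{S}-\{Z\}}(S)=\mu_{\mathfrak{S}}(S,Z)\,b_{\mathfrak{S}}(Z)$.
   Context: $M$ has rank $k$. For $\mathfrak{T}\subseteq\mathcal{P}(E)$, viewed as a poset under inclusion with Möbius function $\mu_{\mathfrak{T}}$: $c(T)=\#T-\mathrm{rk}\,T$; $a_{\mathfrak{T}}(S)=\sum_{T\in\mathfrak{T}}c(T)\mu_{\mathfrak{T}}(T,S)$ (equivalently $a_{\mathfrak{T}}(S)=c(S)-\sum_{T\in\mathfrak{T},T\subsetneq S}a_{\mathfrak{T}}(T)$); $b_{\mathfrak{T}}(T)=\sum_{S\in\mathfrak{T}}(k-\mathrm{rk}\,S)\mu_{\mathfrak{T}}(T,S)$; $\mathrm{ec}_{\mathfrak{T}}(M)=\sum_{S\in\mathfrak{T}}(k-\mathrm{rk}\,S)a_{\mathfrak{T}}(S)$. *)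

From mathcomp Require Import all_boot all_order all_algebra.
Set Implicit Arguments. Unset Strict Implicit. Unset Printing Implicit Defensive.
Import GRing.Theory Num.Theory.
Local Open Scope ring_scope.

(* A matroid on the finite ground set E = [set: T], given by its rank function
   (rank axioms R1-R3). *)
Definition is_matroid_rank (T : finType) (rk : {set T} -> nat) : Prop :=
  [/\ forall A : {set T}, (rk A <= #|A|)%N,
      forall A B : {set T}, A \subset B -> (rk A <= rk B)%N
    & forall A B : {set T}, (rk (A :|: B) + rk (A :&: B) <= rk A + rk B)%N].

(* The recursion uses fuel (#|y|.+1), which suffices
   since #|z| < #|y| whenever z is a proper subset of y. *)
Fixpoint mobius_fuel (T : finType) (F : {set {set T}}) (n : nat)
    (x y : {set T}) : int :=
  match n with
  | 0%N => 0
  | n'.+1 =>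
      if x == y then 1
      else if x \proper y then
        - \sum_(z in F | (x \subset z) && (z \proper y)) mobius_fuel F n' x z
      else 0
  end.

Definition mobius (T : finType) (F : {set {set T}}) (x y : {set T}) : int :=
  mobius_fuel F (#|y|.+1) x y.

Section Invariants.
Variables (T : finType) (rk : {set T} -> nat).

Definition mrank : nat := rk [set: T].

Definition cnull (A : {set T}) : int := (#|A|%:Z - (rk A)%:Z).

Definition acoef (F : {set {set T}}) (S : {set T}) : int :=
  \sum_(A in F) cnull A * mobius F A S.

Definition bcoef (F : {set {set T}}) (A : {set T}) : int :=
  \sum_(S in F) ((mrank)%:Z - (rk S)%:Z) * mobius F A S.

Definition ec (F : {set {set T}}) : int :=
  \sum_(S in F) ((mrank)%:Z - (rk S)%:Z) * acoef F S.
End Invariants.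

From mathcomp Require Import all_boot all_order all_algebra.
From mathcomp Require Import ring.
Set Implicit Arguments. Unset Strict Implicit. Unset Printing Implicit Defensive.
Import GRing.Theory Num.Theory.
Local Open Scope ring_scope.

(* Removing z from the poset changes its Moebius function by the chains
   passing through z: mu_{F-z}(x,y) = mu_F(x,y) - mu_F(x,z) mu_F(z,y).
   The coefficients a and b are the Moebius transforms of c and of the corank
   from below and from above, and ec pairs the corank with a; all three
   identities then follow linearly from this deletion formula, for arbitrary
   weights. *)

Section Mobius.
Variable T : finType.
Implicit Types (F : {set {set T}}) (x y z w : {set T}).

Lemma mobius_fuel_stable F n m x y : (#|y| < n)%N -> (#|y| < m)%N ->
  mobius_fuel F n x y = mobius_fuel F m x y.
Proof.
elim: n m y => [|n IH] [|m] y //= lt_yn lt_ym.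
case: (x == y) => //; case: (x \proper y) => //; congr (- _).
apply: eq_bigr => w /andP[_ /andP[_ /proper_card lt_wy]].
by apply: IH; [exact: leq_trans lt_wy lt_yn | exact: leq_trans lt_wy lt_ym].
Qed.

Lemma mobiusE F x y : mobius F x y =
  if x == y then 1 else if x \proper y then
   - \sum_(w in F | (x \subset w) && (w \proper y)) mobius F x w else 0.
Proof.
rewrite {1}/mobius /=; case: (x == y) => //; case: (x \proper y) => //.
congr (- _); apply: eq_bigr => w /andP[_ /andP[_ /proper_card lt_wy]].
exact: mobius_fuel_stable.
Qed.

Lemma mobius_id F x : mobius F x x = 1.
Proof. by rewrite mobiusE eqxx. Qed.

Lemma mobius_proper F {x y} : x \proper y ->
  mobius F x y = - \sum_(w in F | (x \subset w) && (w \proper y)) mobius F x w.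
Proof. by move=> xy; rewrite mobiusE xy (negbTE (proper_neq xy)). Qed.

Lemma mobius_eq0 F {x y} : ~~ (x \subset y) -> mobius F x y = 0.
Proof.
move=> nxy; rewrite mobiusE properEneq (negbTE nxy) andbF.
by case: eqP nxy => // ->; rewrite subxx.
Qed.

Lemma mobius_mul_eq0 F x y z : ~~ ((x \subset z) && (z \subset y)) ->
  mobius F x z * mobius F z y = 0.
Proof.
by case/nandP => /mobius_eq0 ->; rewrite ?mul0r ?mulr0.
Qed.

Lemma sum_setD1_cond {G : {set {set T}}} {z} (P : pred {set T})
    (f : {set T} -> int) : z \in G ->
  \sum_(w in G | P w) f w = (P z)%:R * f z + \sum_(w in G :\ z | P w) f w.
Proof.
move=> zG; rewrite !big_mkcondr (big_setD1 _ zG) /=.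
by case: (P z); rewrite ?mul1r ?mul0r ?add0r.
Qed.

Lemma sum_mobius_from F (G : {set {set T}}) {x z y} : x \subset z ->
  \sum_(w in G | (x \subset w) && (w \proper y)) mobius F z w =
  \sum_(w in G | (z \subset w) && (w \proper y)) mobius F z w.
Proof.
move=> xz; rewrite !big_mkcondr; apply: eq_bigr => w _.
case zw: (z \subset w); first by rewrite (subset_trans xz zw).
by rewrite mobius_eq0 ?zw //; case: ifP.
Qed.

Lemma mobius_split_bottom {F z y} : z \in F -> y != z ->
  mobius F z y = - (z \proper y)%:R -
    \sum_(w in F :\ z | (z \subset w) && (w \proper y)) mobius F z w.
Proof.
move=> zF yz; have [zy | nzy] := boolP (z \proper y).
  by rewrite mobius_proper // (sum_setD1_cond _ _ zF) subxx zy mobius_id; ring.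
rewrite mobius_eq0 ?big1 ?oppr0 ?subr0 //.
  by move=> w /andP[_ /andP[zw wy]]; rewrite (sub_proper_trans zw wy) in nzy.
by move: nzy; rewrite properEneq eq_sym yz.
Qed.

Lemma mobius_setD1 F z x y : z \in F -> x != z -> y != z ->
  mobius (F :\ z) x y = mobius F x y - mobius F x z * mobius F z y.
Proof.
move=> zF xz; have [n lt_yn] := ubnP #|y|; elim: n y lt_yn => // n IH y lt_yn yz.
have [<- | xy] := eqVneq x y.
  rewrite !mobius_id mobius_mul_eq0 ?subr0 //.
  by apply: contra xz; rewrite eqEsubset.
have [pxy | npxy] := boolP (x \proper y); last first.
  rewrite mobius_mul_eq0 ?subr0; first by rewrite !mobiusE (negbTE xy) (negbTE npxy).
  by apply: contra npxy => /andP[/subset_trans xzy /xzy]; rewrite properEneq xy.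
rewrite (mobius_proper (F :\ z) pxy) (mobius_proper F pxy) (sum_setD1_cond _ _ zF).
rewrite (eq_bigr (fun w => mobius F x w - mobius F x z * mobius F z w)); last first.
  move=> w /andP[]; rewrite in_setD1 => /andP[wz _] /andP[_ /proper_card lt_wy].
  by apply: IH => //; exact: leq_trans lt_wy lt_yn.
rewrite sumrB -big_distrr /=.
have [xsz | nxz] := boolP (x \subset z); last first.
  by rewrite !(mobius_eq0 _ nxz) !mul0r; ring.
by rewrite (sum_mobius_from _ _ xsz) (mobius_split_bottom zF yz); ring.
Qed.

Definition mobius_down F (f : {set T} -> int) y : int :=
  \sum_(x in F) f x * mobius F x y.

Definition mobius_up F (g : {set T} -> int) x : int :=
  \sum_(y in F) g y * mobius F x y.

Definition mobius_pair F (f g : {set T} -> int) : int :=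
  \sum_(y in F) g y * mobius_down F f y.

Lemma mobius_down_setD1 F f z y : z \in F -> y != z ->
  mobius_down (F :\ z) f y = mobius_down F f y - mobius_down F f z * mobius F z y.
Proof.
move=> zF yz; rewrite /mobius_down !(big_setD1 _ zF) /= !mobius_id.
rewrite (eq_bigr (fun x => f x * mobius F x y - f x * mobius F x z * mobius F z y)).
  by rewrite sumrB -big_distrl /=; ring.
by move=> x; rewrite in_setD1 => /andP[xz _]; rewrite mobius_setD1 // mulrBr mulrA.
Qed.

Lemma mobius_up_setD1 F g z x : z \in F -> x != z ->
  mobius_up (F :\ z) g x = mobius_up F g x - mobius F x z * mobius_up F g z.
Proof.
move=> zF xz; rewrite /mobius_up !(big_setD1 _ zF) /= !mobius_id.
rewrite (eq_bigr (fun y => g y * mobius F x y - mobius F x z * (g y * mobius F z y))).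
  by rewrite sumrB -big_distrr /=; ring.
by move=> y; rewrite in_setD1 => /andP[yz _]; rewrite mobius_setD1 //; ring.
Qed.

Lemma mobius_pair_setD1 F f g z : z \in F ->
  mobius_pair F f g - mobius_pair (F :\ z) f g =
  mobius_down F f z * mobius_up F g z.
Proof.
move=> zF; rewrite /mobius_pair /mobius_up !(big_setD1 _ zF) /= mobius_id.
rewrite [X in _ - X](eq_bigr (fun y => g y * mobius_down F f y -
                                      mobius_down F f z * (g y * mobius F z y))).
  by rewrite sumrB -big_distrr /=; ring.
by move=> y; rewrite in_setD1 => /andP[yz _]; rewrite mobius_down_setD1 //; ring.
Qed.

End Mobius.

Theorem proposition6p3 (T : finType) (rk : {set T} -> nat)
  (Hrk : is_matroid_rank rk) (S : {set {set T}}) (Z : {set T})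
  (HZ : Z \in S) :
  [/\ ec rk S - ec rk (S :\ Z) = acoef rk S Z * bcoef rk S Z,
      (forall X, X \in S :\ Z ->
         acoef rk S X - acoef rk (S :\ Z) X = acoef rk S Z * mobius S Z X)
    & (forall X, X \in S :\ Z ->
         bcoef rk S X - bcoef rk (S :\ Z) X = mobius S X Z * bcoef rk S Z)].
Proof.
pose corank (A : {set T}) : int := (mrank rk)%:Z - (rk A)%:Z.
have acoefE F : acoef rk F = mobius_down F (cnull rk) by [].
have bcoefE F : bcoef rk F = mobius_up F corank by [].
have ecE F : ec rk F = mobius_pair F (cnull rk) corank by [].
split; first by rewrite !ecE acoefE bcoefE mobius_pair_setD1.
- move=> X; rewrite in_setD1 => /andP[XZ _].
  by rewrite !acoefE mobius_down_setD1 //; ring.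
- move=> X; rewrite in_setD1 => /andP[XZ _].
  by rewrite !bcoefE mobius_up_setD1 //; ring.
Qed.
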